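(* Let $\mathcal{R}$ be a left-connected rewriting system over a signature $\Sigma$, let $L_1$ and $L_2$ be the left-hand sides of two rules of $\mathcal{R}$, and let $(g_1,g_2\colon G\to L_1+L_2)$ be a gluing scheme that yields a pre-critical pair. If a node $A$ of $L_1$ and a node $B$ of $L_2$ are glued, then one of the following holds: (a) there are glued hyperedges $e_1$ of $L_1$ and $e_2$ of $L_2$ and an index $k$ such that $A$ is the $k$-th source of $e_1$ and $B$ is the $k$-th source of $e_2$; (b) there are glued hyperedges $e_1$ of $L_1$ and $e_2$ of $L_2$ and an index $i$ such that $A$ is the $i$-th target of $e_1$ and $B$ is the $i$-th target of $e_2$; (c) $A\in out(L_1)$ and $B\in in(L_2)$; (d) $A\in in(L_1)$ and $B\in out(L_2)$.
   Context: A signature $\Sigma$ is a set of triples $(x,n,m)$ (label, arity, coarity). A $\Sigma$-hypergraph $G=(V,E,s,t,l)$ has finite sets $V$ (nodes), $E$ (hyperedges), maps $s,t\colon E\to V^*$ (lists of sources/targets) and a labelling $l\colon E\to\Sigma$ sending a hyperedge with $n$ sources and $m$ targets to some $(x,n,m)$. Morphisms $f=(f_V,f_E)$ preserve sources, targets and labels; they form the category $\mathbf{Hyp}_\Sigma$, where colimits are computed componentwise and monos/epis are injective/surjective on nodes and hyperedges. Composition is written $f;g$; $\iota_1,\iota_2$ are coprojections. A hypergraph is discrete if it has no hyperedges. A path is a list of hyperedges $[e_1,\dots,e_n]$ with some target of $e_k$ equal to a source of $e_{k+1}$ for each $k$; it goes from $v$ to $v'$ if $v$ is a source of $e_1$ and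 $v'$ a target of $e_n$; a cycle is a path with some source of $e_1$ a target of $e_n$. In-degree (out-degree) of a node $v$: number of pairs $(e,i)$ with $v$ the $i$-th target (source) of $e$; $in(H)$, $out(H)$: nodes of in-degree $0$, out-degree $0$. $H$ is ma (monogamous acyclic) if it has no cycle and all in- and out-degrees are $\le 1$. A cospan $I\to H\leftarrow O$ with $I,O$ discrete is an ma-cospan if $H$ is ma and the legs are mono with images $in(H)$ and $out(H)$. $H$ is strongly connected if for all $x\in in(H)$, $y\in out(H)$ there is a path from $x$ to $y$. A left-connected rule is a span $L\xleftarrow{[i_L,o_L]}I+O\xrightarrow{[i_R,o_R]}R$ with $I,O$ discrete, $I\to L\leftarrow O$ and $I\to R\leftarrow O$ ma-cospans, $[i_L,o_L]$ mono and $L$ strongly connected; a left-connected rewriting system is a finite set of such rules. A convex match is a mono $m\colon L\to G$ such that every path in $G$ between two nodes of $m(L)$ has all its hyperedges in $m(L)$. A derivation between ma-cospans $n\to G\leftarrow m$ and $n\to H\leftarrow m$ via a rule $L\leftarrow K\to R$ is given by a convex match $L\to G$ and a double-pushout diagram $L\leftarrow K\to R$ over $G\leftarrow C\to H$ with both squares pushouts (the left one a boundary complement, which is automatic for left-connected systems) commuting with the interface $n+m$; for left-connected systems mono matches are automatically convex and pushout complements exist uniquely. A pre-critical pair consists of two derivations, via rules with left-hand sides $L_1,L_2$, from a common ma-cospan $n\to S\leftarrow m$ with matches $m_1,m_2$ such that $[m_1,m_2]\colon L_1+L_2\to S$ is epi. A gluing scheme for $L_1,L_2$ is a $\Sigma$-hypergraph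 $G$ with morphisms $g_1,g_2\colon G\to L_1+L_2$; its gluing is the coequaliser $\epsilon\colon L_1+L_2\to S=\mathtt{coeq}(g_1,g_2)$. Two nodes (or hyperedges) $x,x'$ of $L_1+L_2$ are glued if some node (hyperedge) $y$ of $G$ has $g_1(y)=x$, $g_2(y)=x'$. The gluing scheme yields a pre-critical pair if $\iota_1;\epsilon$ and $\iota_2;\epsilon$ are mono and $in(S)\xrightarrow{\subseteq}S\xleftarrow{\subseteq}out(S)$ is an ma-cospan; the pre-critical pair is then formed by the (unique) derivations from this ma-cospan with matches $\iota_1;\epsilon$ and $\iota_2;\epsilon$. *)

From HB Require Import structures.
From mathcomp Require Import all_boot.
Set Implicit Arguments. Unset Strict Implicit. Unset Printing Implicit Defensive.

Record signature := Signature {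
  sym :> Type;
  ar : sym -> nat;
  coar : sym -> nat }.

Section Hyp.
Variable Sig : signature.

Record hyp := Hyp {
  hV : finType;
  hE : finType;
  hsrc : hE -> seq hV;
  htgt : hE -> seq hV;
  hlab : hE -> sym Sig;
  hsrc_size : forall e, size (hsrc e) = ar (hlab e);
  htgt_size : forall e, size (htgt e) = coar (hlab e) }.

Record hmor (G H : hyp) := HMor {
  mV : hV G -> hV H;
  mE : hE G -> hE H;
  mor_src : forall e, hsrc (mE e) = map mV (hsrc e);
  mor_tgt : forall e, htgt (mE e) = map mV (htgt e);
  mor_lab : forall e, hlab (mE e) = hlab e }.

Definition mor_eq G H (f g : hmor G H) :=
  mV f =1 mV g /\ mE f =1 mE g.

Definition comp G H K (f : hmor G H) (g : hmor H K) : hmor G K.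
Proof.
refine (@HMor G K (mV g \o mV f) (mE g \o mE f) _ _ _) => e /=.
- by rewrite mor_src mor_src map_comp.
- by rewrite mor_tgt mor_tgt map_comp.
- by rewrite !mor_lab.
Defined.

Definition mono G H (f : hmor G H) := injective (mV f) /\ injective (mE f).

Definition discrete (G : hyp) := #|hE G| = 0.

Definition coprod (G H : hyp) : hyp.
Proof.
refine (@Hyp (hV G + hV H)%type (hE G + hE H)%type
  (fun e => match e with inl e => map inl (hsrc e) | inr e => map inr (hsrc e) end)
  (fun e => match e with inl e => map inl (htgt e) | inr e => map inr (htgt e) end)
  (fun e => match e with inl e => hlab e | inr e => hlab e end) _ _);
  by case=> e; rewrite size_map ?hsrc_size ?htgt_size.
Defined.

Definition inj1 G H : hmor G (coprod G H).
Proof. by refine (@HMor G (coprod G H) inl inl _ _ _). Defined.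
Definition inj2 G H : hmor H (coprod G H).
Proof. by refine (@HMor H (coprod G H) inr inr _ _ _). Defined.

Definition copair G H K (f : hmor G K) (g : hmor H K) : hmor (coprod G H) K.
Proof.
refine (@HMor (coprod G H) K
  (fun v => match v with inl v => mV f v | inr v => mV g v end)
  (fun e => match e with inl e => mE f e | inr e => mE g e end) _ _ _);
  case=> e /=; rewrite ?mor_src ?mor_tgt ?mor_lab -?map_comp //.
Defined.

Definition is_coeq A B C (f1 f2 : hmor A B) (q : hmor B C) :=
  mor_eq (comp f1 q) (comp f2 q) /\
  forall D (h : hmor B D), mor_eq (comp f1 h) (comp f2 h) ->
    exists u : hmor C D, mor_eq (comp q u) h /\
      forall u' : hmor C D, mor_eq (comp q u') h -> mor_eq u u'.

Definition indeg (G : hyp) (v : hV G) := \sum_(e : hE G) count_mem v (htgt e).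
Definition outdeg (G : hyp) (v : hV G) := \sum_(e : hE G) count_mem v (hsrc e).
Definition inset (G : hyp) : pred (hV G) := fun v => indeg v == 0.
Definition outset (G : hyp) : pred (hV G) := fun v => outdeg v == 0.
Arguments inset : clear implicits.
Arguments outset : clear implicits.

Definition linked (G : hyp) (e f : hE G) := has (fun v => v \in hsrc f) (htgt e).

Definition is_path_from (G : hyp) (v v' : hV G) (p : seq (hE G)) :=
  match p with
  | [::] => False
  | e :: p' => [/\ path (@linked G) e p', v \in hsrc e & v' \in htgt (last e p')]
  end.

Definition is_cycle (G : hyp) (p : seq (hE G)) :=
  match p with
  | [::] => False
  | e :: p' => path (@linked G) e p' /\ linked (last e p') e
  end.

Definition is_ma (G : hyp) :=
  [/\ forall p : seq (hE G), ~ is_cycle p,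
      forall v : hV G, indeg v <= 1 & forall v : hV G, outdeg v <= 1].

Definition ma_cospan (I H O : hyp) (i : hmor I H) (o : hmor O H) :=
  [/\ discrete I, discrete O, is_ma H, mono i & mono o] /\
  (forall v, (v \in inset H) = (v \in codom (mV i))) /\
  (forall v, (v \in outset H) = (v \in codom (mV o))).

Definition strongly_connected (G : hyp) :=
  forall x y : hV G, x \in inset G -> y \in outset G ->
    exists p, is_path_from x y p.

Record lc_rule := LCRule {
  rL : hyp; rR : hyp; rI : hyp; rO : hyp;
  riL : hmor rI rL; roL : hmor rO rL;
  riR : hmor rI rR; roR : hmor rO rR;
  rI_discrete : discrete rI;
  rO_discrete : discrete rO;
  rL_macospan : ma_cospan riL roL;
  rR_macospan : ma_cospan riR roR;
  rL_mono : mono (copair riL roL);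
  rL_sc : strongly_connected rL }.

Definition discr_on (G : hyp) (P : pred (hV G)) : hyp.
Proof.
refine (@Hyp {v : hV G | P v} 'I_0 (fun e => [::]) (fun e => [::])
               (fun e => match e with Ordinal _ h => False_rect _ (notF h) end) _ _);
by case.
Defined.

Definition discr_incl (G : hyp) (P : pred (hV G)) : hmor (discr_on P) G.
Proof.
refine (@HMor (discr_on P) G val (fun e => match e with Ordinal _ h => False_rect _ (notF h) end) _ _ _);
by case.
Defined.

Definition yields_precritical (L1 L2 G S : hyp)
  (g1 g2 : hmor G (coprod L1 L2)) (eps : hmor (coprod L1 L2) S) :=
  [/\ is_coeq g1 g2 eps,
      mono (comp (@inj1 L1 L2) eps),
      mono (comp (@inj2 L1 L2) eps) &
      ma_cospan (discr_incl (inset S)) (discr_incl (outset S))].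

Definition glued_dir_V G L (g1 g2 : hmor G L) (x x' : hV L) :=
  exists y, mV g1 y = x /\ mV g2 y = x'.
Definition glued_dir_E G L (g1 g2 : hmor G L) (x x' : hE L) :=
  exists y, mE g1 y = x /\ mE g2 y = x'.
Definition glued_V G L (g1 g2 : hmor G L) (x x' : hV L) :=
  glued_dir_V g1 g2 x x' \/ glued_dir_V g1 g2 x' x.
Definition glued_E G L (g1 g2 : hmor G L) (x x' : hE L) :=
  glued_dir_E g1 g2 x x' \/ glued_dir_E g1 g2 x' x.

End Hyp.
Arguments inset {Sig} G.
Arguments outset {Sig} G.

From Pilot Require Import Defs.
From HB Require Import structures.
From mathcomp Require Import all_boot.
Set Implicit Arguments. Unset Strict Implicit. Unset Printing Implicit Defensive.

(* By the universal property of the coequaliser, the gluing S identifies two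
   hyperedges only if they are linked by a zigzag of glued pairs; since L1 and
   L2 embed into S, such a zigzag between [e1] of L1 and [e2] of L2 collapses
   to a single glued pair.  If A and B both have outgoing hyperedges, they have
   the same image in S, so monogamy of S forces the images of these hyperedges,
   and the source positions, to coincide: the hyperedges are glued, case (a).
   Dually for incoming hyperedges, case (b).  Otherwise one of A, B is an
   output and one is an input; as no node of a strongly connected L is both an
   input and an output (a path from it to itself would leave it), this gives
   (c) or (d). *)

Lemma connect_invariant (T : finType) (e : rel T) (R : Type) (g : T -> R) :
  (forall x y, e x y -> g x = g y) -> forall x y, connect e x y -> g x = g y.
Proof.
move=> ge x _ /connectP[p e_p ->].
by elim: p x e_p => //= y p IHp x /andP[/ge-> /IHp].
Qed.

Lemma connect_inl_inr (T1 T2 : finType) (R : Type) (e : rel (T1 + T2))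
    (f : T1 + T2 -> R) :
  (forall x y, e x y -> f x = f y) -> injective (f \o inl) -> injective (f \o inr) ->
  forall a b, connect e (inl a) (inr b) -> e (inl a) (inr b).
Proof.
move=> fe inj_l inj_r a b /connectP[p].
elim: p a => [|y p IHp] a //= /andP[e_ay e_p] lastE.
case: y e_ay e_p lastE => [a' | b'] e_ay e_p lastE.
  have <- : a' = a by apply: inj_l; exact/esym/(fe _ _ e_ay).
  exact: IHp.
have f_b' : f (inr b') = f (inr b).
  by apply: (connect_invariant fe); apply/connectP; exists p.
by rewrite -(inj_r _ _ f_b').
Qed.

Lemma count_mem_le1_onth_inj (T : eqType) (s : seq T) v i j :
  count_mem v s <= 1 -> onth s i = Some v -> onth s j = Some v -> i = j.
Proof.
have head_twice s' k : onth s' k = Some v -> 1 < count_mem v (v :: s').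
  by move=> vs; rewrite /= eqxx add1n ltnS -has_count has_pred1; apply/onthP; exists k.
elim: s i j => [|x s IHs] [|i] [|j] //= le1.
- by case=> xv; rewrite xv in le1 => /head_twice; rewrite ltnNge le1.
- by move=> + [xv]; rewrite xv in le1 => /head_twice; rewrite ltnNge le1.
- by move=> /IHs si /si ->//; apply: leq_trans le1; apply: leq_addl.
Qed.

Lemma sum_count_mem_le1_onth_inj (I : finType) (T : eqType) (f : I -> seq T) v x y i j :
  \sum_z count_mem v (f z) <= 1 ->
  onth (f x) i = Some v -> onth (f y) j = Some v -> x = y /\ i = j.
Proof.
move=> le1 fx fy.
have count_gt0 z k : onth (f z) k = Some v -> 0 < count_mem v (f z).
  by move=> h; rewrite -has_count has_pred1; apply/onthP; exists k.
have [exy | nxy] := eqVneq x y.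
  subst y; split=> //; apply: (count_mem_le1_onth_inj _ fx fy).
  by apply: leq_trans le1; rewrite (bigD1 x) //= leq_addr.
move: le1; rewrite (bigD1 x) //= (bigD1 y) 1?eq_sym //= addnA leqNgt ltn_addr //.
exact: leq_add (count_gt0 _ _ fx) (count_gt0 _ _ fy).
Qed.

Lemma sum_count_mem_eq0 (I : finType) (T : eqType) (f : I -> seq T) v :
  (\sum_z count_mem v (f z) == 0) = [forall z, v \notin f z].
Proof. by rewrite sum_nat_eq0; apply: eq_forallb => z; apply: sameP eqP count_memPn. Qed.

Section GluingRelation.
Variables (T U : finType) (f1 f2 : T -> U).

Definition glue_rel : rel U := fun x x' =>
  [exists y, (f1 y == x) && (f2 y == x')] || [exists y, (f1 y == x') && (f2 y == x)].

Lemma glue_relP x x' :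
  reflect ((exists y, f1 y = x /\ f2 y = x') \/ (exists y, f1 y = x' /\ f2 y = x))
          (glue_rel x x').
Proof.
apply: (iffP orP) => [|[] [y [<- <-]]]; last 2 first.
- by left; apply/existsP; exists y; rewrite !eqxx.
- by right; apply/existsP; exists y; rewrite !eqxx.
by case=> /existsP[y /andP[/eqP <- /eqP <-]]; [left | right]; exists y.
Qed.

Lemma glue_rel_sym : symmetric glue_rel.
Proof. by move=> x x'; rewrite /glue_rel orbC. Qed.

Lemma root_glue_rel y : root glue_rel (f1 y) = root glue_rel (f2 y).
Proof.
apply/(rootP (sym_connect_sym glue_rel_sym))/connect1/glue_relP.
by left; exists y.
Qed.

End GluingRelation.

Section Coequaliser.
Variables (Sig : signature) (G L : hyp Sig) (g1 g2 : hmor G L).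

Local Notation relV := (glue_rel (mV g1) (mV g2)).
Local Notation relE := (glue_rel (mE g1) (mE g2)).

Lemma coeq_glued_V C (q : hmor L C) x x' :
  is_coeq g1 g2 q -> glued_V g1 g2 x x' -> mV q x = mV q x'.
Proof. by case=> [[qV _] _] [] [y [<- <-]]; [|symmetry]; exact: qV. Qed.

Lemma connect_glue_rel_shape e e' : connect relE e e' ->
  [/\ map (root relV) (hsrc e) = map (root relV) (hsrc e'),
      map (root relV) (htgt e) = map (root relV) (htgt e') & hlab e = hlab e'].
Proof.
move=> con.
pose shape d := (map (root relV) (hsrc d), map (root relV) (htgt d), hlab d).
have shape_g12 y : shape (mE g1 y) = shape (mE g2 y).
  rewrite /shape !mor_src !mor_tgt !mor_lab -!map_comp.
  by congr (_, _, _); apply: eq_map => v; exact: root_glue_rel.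
suff : shape e = shape e' by case=> -> -> ->.
apply: connect_invariant con => x x' /glue_relP[] [y [<- <-]]; [|symmetry].
all: exact: shape_g12.
Qed.

(* Sending every node and hyperedge to the root of its class does not produce
   the coequaliser (non-root elements survive), but it coequalises [g1, g2]
   and identifies exactly the [connect]ed elements, which is all we need. *)
Definition glue_hyp : hyp Sig.
Proof.
refine (@Hyp Sig (hV L) (hE L) (fun e => map (root relV) (hsrc e))
          (fun e => map (root relV) (htgt e)) (@hlab _ L) _ _) => e;
  by rewrite size_map ?hsrc_size ?htgt_size.
Defined.

Definition glue_proj : hmor L glue_hyp.
Proof.
refine (@HMor _ L glue_hyp (root relV) (root relE) _ _ _) => e /=;
  by case: (connect_glue_rel_shape (connect_root relE e)).
Defined.

Lemma glue_proj_coeq : mor_eq (Defs.comp g1 glue_proj) (Defs.comp g2 glue_proj).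
Proof. by split=> y; exact: root_glue_rel. Qed.

Lemma coeq_mE_connect C (q : hmor L C) e e' :
  is_coeq g1 g2 q -> mE q e = mE q e' -> connect relE e e'.
Proof.
case=> _ /(_ _ glue_proj glue_proj_coeq) [u [[_ quE] _]] qe.
apply/(rootP (sym_connect_sym (@glue_rel_sym _ _ _ _))).
by have := quE e; have := quE e'; rewrite /= qe => -> ->.
Qed.

End Coequaliser.

Section Degrees.
Variables (Sig : signature) (G : hyp Sig).

Lemma outsetPn (v : hV G) : reflect (exists e, v \in hsrc e) (v \notin outset G).
Proof.
rewrite [v \in _]/in_mem /= /outset /outdeg sum_count_mem_eq0 negb_forall.
by apply: (iffP existsP) => -[e] v_e; exists e; rewrite ?negbK in v_e *.
Qed.

Lemma insetPn (v : hV G) : reflect (exists e, v \in htgt e) (v \notin inset G).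
Proof.
rewrite [v \in _]/in_mem /= /inset /indeg sum_count_mem_eq0 negb_forall.
by apply: (iffP existsP) => -[e] v_e; exists e; rewrite ?negbK in v_e *.
Qed.

Lemma strongly_connected_outset_inset (v : hV G) :
  strongly_connected G -> v \in outset G -> v \notin inset G.
Proof.
move=> scG v_out; apply/negP => v_in.
have [[|e p] // [_ v_src _]] := scG v v v_in v_out.
by move: v_out; apply/negP/outsetPn; exists e.
Qed.

End Degrees.

Section PreCriticalGluing.
Variables (Sig : signature) (L1 L2 G S : hyp Sig).
Variables (g1 g2 : hmor G (coprod L1 L2)) (eps : hmor (coprod L1 L2) S).
Hypotheses (eps_coeq : is_coeq g1 g2 eps)
  (eps_mono1 : mono (Defs.comp (@inj1 _ L1 L2) eps))
  (eps_mono2 : mono (Defs.comp (@inj2 _ L1 L2) eps))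
  (S_ma : is_ma S).

Lemma glued_E_of_mE_eq e1 e2 :
  mE eps (inl e1) = mE eps (inr e2) -> glued_E g1 g2 (inl e1) (inr e2).
Proof.
have [[_ epsE] _] := eps_coeq.
move=> /(coeq_mE_connect eps_coeq) con; apply/glue_relP.
apply: (connect_inl_inr _ eps_mono1.2 eps_mono2.2 con).
by move=> x x' /glue_relP[] [y [<- <-]]; [|symmetry]; exact: epsE.
Qed.

Lemma glued_common_source A B e1 e2 k j :
  mV eps (inl A) = mV eps (inr B) ->
  onth (hsrc e1) k = Some A -> onth (hsrc e2) j = Some B ->
  glued_E g1 g2 (inl e1) (inr e2) /\ k = j.
Proof.
case: S_ma => _ _ outdeg_le1 epsAB e1A e2B.
have [e12 <-] : mE eps (inl e1) = mE eps (inr e2) /\ k = j.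
  apply: (sum_count_mem_le1_onth_inj (outdeg_le1 (mV eps (inl A))));
    by rewrite mor_src /= !onth_map ?e1A ?e2B /= ?epsAB.
by split; first exact: glued_E_of_mE_eq.
Qed.

Lemma glued_common_target A B e1 e2 i j :
  mV eps (inl A) = mV eps (inr B) ->
  onth (htgt e1) i = Some A -> onth (htgt e2) j = Some B ->
  glued_E g1 g2 (inl e1) (inr e2) /\ i = j.
Proof.
case: S_ma => _ indeg_le1 _ epsAB e1A e2B.
have [e12 <-] : mE eps (inl e1) = mE eps (inr e2) /\ i = j.
  apply: (sum_count_mem_le1_onth_inj (indeg_le1 (mV eps (inl A))));
    by rewrite mor_tgt /= !onth_map ?e1A ?e2B /= ?epsAB.
by split; first exact: glued_E_of_mE_eq.
Qed.

End PreCriticalGluing.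

Theorem mainTheorem2 (Sig : signature) (n : nat) (Rsys : 'I_n -> lc_rule Sig)
  (r1 r2 : 'I_n) (G S : hyp Sig)
  (g1 g2 : hmor G (coprod (rL (Rsys r1)) (rL (Rsys r2))))
  (eps : hmor (coprod (rL (Rsys r1)) (rL (Rsys r2))) S) :
  yields_precritical g1 g2 eps ->
  forall (A : hV (rL (Rsys r1))) (B : hV (rL (Rsys r2))),
    glued_V g1 g2 (inl A) (inr B) ->
    [\/ exists (e1 : hE (rL (Rsys r1))) (e2 : hE (rL (Rsys r2))) (k : nat),
          [/\ glued_E g1 g2 (inl e1) (inr e2),
              onth (hsrc e1) k = Some A & onth (hsrc e2) k = Some B],
        exists (e1 : hE (rL (Rsys r1))) (e2 : hE (rL (Rsys r2))) (i : nat),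
          [/\ glued_E g1 g2 (inl e1) (inr e2),
              onth (htgt e1) i = Some A & onth (htgt e2) i = Some B],
        A \in outset (rL (Rsys r1)) /\ B \in inset (rL (Rsys r2)) |
        A \in inset (rL (Rsys r1)) /\ B \in outset (rL (Rsys r2))].
Proof.
case=> eps_coeq mono1 mono2 [[_ _ S_ma _ _] _] A B /(coeq_glued_V eps_coeq) AB.
have [A_out | /outsetPn[e1 /onthP[k e1A]]] := boolP (A \in outset _).
  have /insetPn[e1 /onthP[i e1A]] :=
    strongly_connected_outset_inset (@rL_sc _ (Rsys r1)) A_out.
  have [B_in | /insetPn[e2 /onthP[j e2B]]] := boolP (B \in inset _).
    by constructor 3.
  have [glued ?] := glued_common_target eps_coeq mono1 mono2 S_ma AB e1A e2B.
  by subst j; constructor 2; exists e1, e2, i.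
have [B_out | /outsetPn[e2 /onthP[j e2B]]] := boolP (B \in outset _); last first.
  have [glued ?] := glued_common_source eps_coeq mono1 mono2 S_ma AB e1A e2B.
  by subst j; constructor 1; exists e1, e2, k.
have /insetPn[e2' /onthP[j' e2'B]] :=
  strongly_connected_outset_inset (@rL_sc _ (Rsys r2)) B_out.
have [A_in | /insetPn[e1' /onthP[i e1'A]]] := boolP (A \in inset _).
  by constructor 4.
have [glued ?] := glued_common_target eps_coeq mono1 mono2 S_ma AB e1'A e2'B.
by subst j'; constructor 2; exists e1', e2', i.
Qed.
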